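(* Let $q$ be a prime power, $m\ge 2$, $1\le k<n$, and let $0<s<m$ with $\gcd(s,m)=1$. Then: (1) For $A \in \mathbb{F}_{q^m}^{k\times (n-k)}$, there exists $X \in \mathbb{F}_{q^m}^{k\times (n-k)}$ with $\varPhi_s(X)=A$ if and only if $A\in\mathcal K$. (2) If $A \in \mathcal R_1$, then $|\varPhi_s^{-1}(A)|=0$ if $A\notin \mathcal K$, and $|\varPhi_s^{-1}(A)|=q^{k(n-k)}$ if $A\in \mathcal K$. (3) $\mathcal G(s)=\varPhi_s^{-1}(\mathcal R_1^*\cap \mathcal K)$, and $|\mathcal G(1)|=|\mathcal G(s)|=q^{k(n-k)}|\mathcal R_1^*\cap \mathcal K|$.
   Context: $\mathrm{Tr}_{\mathbb{F}_{q^m}/\mathbb{F}_q}(\alpha)=\sum_{i=0}^{m-1}\alpha^{q^i}$. $\varPhi_s:\mathbb{F}_{q^m}^{k\times (n-k)}\to\mathbb{F}_{q^m}^{k\times (n-k)}$, $X\mapsto X^{(q^s)}-X$, where $X^{(q^s)}$ raises each entry to the $q^s$-th power. $\mathcal R_1:=\{A\in \mathbb{F}_{q^m}^{k\times (n-k)} \mid \mathrm{rk}(A)=1\}$, $\mathcal R_1^*:=\{A\in (\mathbb{F}_{q^m}^* )^{k\times (n-k)} \mid \mathrm{rk}(A)=1\}$, $\mathcal K:=\left(\ker \mathrm{Tr}_{\mathbb{F}_{q^m}/\mathbb{F}_q}\right)^{k\times(n-k)}$, and $\mathcal G(s):=\{X \in (\mathbb{F}_{q^m}\setminus \mathbb{F}_q)^{k\times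 (n-k)} \mid \mathrm{rk}(X^{(q^s)}-X)=1\}$. *)

From HB Require Import structures.
From mathcomp Require Import all_boot all_order all_algebra all_field.
Set Implicit Arguments. Unset Strict Implicit. Unset Printing Implicit Defensive.
Import GRing.Theory.
Local Open Scope ring_scope.

(* L plays the role of F_{q^m} (hypothesis #|L| = q^m in the theorem);
   F_q is the subfield {x | x^q = x}. *)
Section Defs.
Variable L : finFieldType.

Definition in_Fq (q : nat) (x : L) : bool := x ^+ q == x.

Definition trace_qm (q m : nat) (a : L) : L := \sum_(i < m) a ^+ (q ^ i).

Variables (k l : nat).

Definition Phi (q s : nat) (X : 'M[L]_(k, l)) : 'M[L]_(k, l) :=
  map_mx (fun x => x ^+ (q ^ s)) X - X.

Definition R1 : {set 'M[L]_(k, l)} := [set A : 'M[L]_(k, l) | \rank A == 1%N].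

Definition R1star : {set 'M[L]_(k, l)} :=
  [set A : 'M[L]_(k, l) | [forall i, forall j, A i j != 0] && (\rank A == 1%N)].

Definition Kset (q m : nat) : {set 'M[L]_(k, l)} :=
  [set A : 'M[L]_(k, l) | [forall i, forall j, trace_qm q m (A i j) == 0]].

Definition Gset (q s : nat) : {set 'M[L]_(k, l)} :=
  [set X : 'M[L]_(k, l) | [forall i, forall j, ~~ in_Fq q (X i j)] && (\rank (Phi q s X) == 1%N)].
End Defs.

Arguments Phi {L k l} q s X.
Arguments R1 L k l.
Arguments R1star L k l.
Arguments Kset L k l q m.
Arguments Gset L k l q s.

(* The map x |-> x^(q^s) - x is F_q-linear on F_{q^m}; since gcd(s, m) = 1 its
   kernel is F_q, and its image lies in ker Tr because the trace is invariant
   under Frobenius.  As |ker Tr| <= q^(m-1) (roots of a polynomial of degree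
   q^(m-1)), counting forces the image to be all of ker Tr and every nonempty
   fibre to have exactly q elements.  Phi_s acts entrywise, so the matrix
   statements follow by taking products over the k(n-k) entries. *)
From mathcomp Require Import all_boot all_algebra all_field.
From mathcomp Require Import ring.
Import GRing.Theory.
Set Implicit Arguments. Unset Strict Implicit. Unset Printing Implicit Defensive.
Local Open Scope ring_scope.

Lemma fixed_expnM (R : pzRingType) (q t a : nat) (x : R) :
  x ^+ (q ^ t) = x -> x ^+ (q ^ (t * a)) = x.
Proof.
move=> fix_x; elim: a => [|a IHa]; first by rewrite muln0 expn0 expr1.
by rewrite mulnS expnD exprM fix_x IHa.
Qed.

Lemma fixed_expn_coprime (R : pzRingType) (q s m : nat) (x : R) :
  (0 < s)%N -> coprime s m ->
  x ^+ (q ^ s) = x -> x ^+ (q ^ m) = x -> x ^+ q = x.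
Proof.
move=> s_gt0 co_sm fix_s fix_m; have [u v def_1 _] := egcdnP m s_gt0.
move: def_1; rewrite (eqP co_sm) => def_1.
move: (fixed_expnM u fix_s); rewrite mulnC def_1 addn1 expnSr exprM mulnC.
by rewrite (fixed_expnM v fix_m).
Qed.

Section FrobeniusPower.
Variables (R : comNzRingType) (q : nat).
Hypothesis q_pchar : [pchar R].-nat q.

Let q_pow_pchar n : [pchar R].-nat (q ^ n)%N.
Proof. by rewrite pnatX q_pchar. Qed.

Lemma frobnD n (x y : R) : (x + y) ^+ (q ^ n) = x ^+ (q ^ n) + y ^+ (q ^ n).
Proof. exact: exprDn_pchar (q_pow_pchar n). Qed.

Lemma frobnB n (x y : R) : (x - y) ^+ (q ^ n) = x ^+ (q ^ n) - y ^+ (q ^ n).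
Proof. by rewrite frobnD (exprNn_pchar _ (q_pow_pchar n)). Qed.

End FrobeniusPower.

Lemma trace_qmB (L : finFieldType) (q m : nat) (x y : L) : [pchar L].-nat q ->
  trace_qm q m (x - y) = trace_qm q m x - trace_qm q m y.
Proof.
by move=> q_pchar; rewrite /trace_qm -sumrB; apply: eq_bigr => i _; apply: frobnB.
Qed.

Lemma trace_qm_frobn (L : finFieldType) (q m s : nat) (x : L) : (0 < m)%N ->
  (forall y : L, y ^+ (q ^ m) = y) -> trace_qm q m (x ^+ (q ^ s)) = trace_qm q m x.
Proof.
case: m => // m _ fixL; elim: s x => [|s IHs] x; first by rewrite expn0 expr1.
rewrite expnS exprM IHs /trace_qm big_ord_recr big_ord_recl /=.
rewrite -exprM -expnS fixL expn0 expr1 addrC; congr (_ + _).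
by apply: eq_bigr => i _; rewrite -exprM -expnS.
Qed.

Lemma card_roots_lt (F : finFieldType) (P : {poly F}) (S : {set F}) :
  P != 0 -> {in S, forall x, root P x} -> (#|S| < size P)%N.
Proof.
move=> P_neq0 rootS; rewrite cardE max_poly_roots ?enum_uniq //.
by apply/allP => x; rewrite mem_enum => /rootS.
Qed.

Lemma size_sum_polyXqn (R : nzRingType) (q j : nat) : (1 < q)%N ->
  size (\sum_(i < j.+1) 'X^(q ^ i) : {poly R}) = (q ^ j).+1.
Proof.
move=> q_gt1; elim: j => [|j IHj]; first by rewrite big_ord1 expn0 size_polyXn.
rewrite big_ord_recr /= addrC size_polyDl size_polyXn // IHj ltnS.
by rewrite ltn_exp2l.
Qed.

Lemma card_ker_trace_qm (F : finFieldType) (S : {set F}) (q m : nat) :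
  (1 < q)%N -> (0 < m)%N ->
  {in S, forall x, trace_qm q m x = 0} -> (#|S| <= q ^ m.-1)%N.
Proof.
case: m => // m q_gt1 _ trS; rewrite -ltnS -(size_sum_polyXqn F m q_gt1).
apply: card_roots_lt => [|x /trS tr_x].
  by rewrite -size_poly_eq0 size_sum_polyXqn.
by rewrite /root horner_sum; under eq_bigr do rewrite hornerXn; apply/eqP; exact: tr_x.
Qed.

Lemma card_fixed_expn_le (F : finFieldType) (S : {set F}) (q : nat) : (1 < q)%N ->
  {in S, forall x, x ^+ q = x} -> (#|S| <= q)%N.
Proof.
move=> q_gt1 fixS; have size_P : size ('X^q - 'X : {poly F}) = q.+1.
  by rewrite size_polyDl size_polyXn // size_polyN size_polyX.
rewrite -ltnS -size_P; apply: card_roots_lt => [|x /fixS].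
  by rewrite -size_poly_eq0 size_P.
by rewrite /root !hornerE => ->; rewrite subrr.
Qed.

Lemma card_preimset_const (T U : finType) (f : T -> U) (B : {set U}) (c : nat) :
  {in B, forall y, #|f @^-1: [set y]| = c} -> #|f @^-1: B| = (#|B| * c)%N.
Proof.
move=> fibB; rewrite -sum1_card (partition_big f (mem B)); last by move=> x; rewrite inE.
rewrite -sum_nat_const; apply: eq_bigr => y yB; rewrite -(fibB y yB) -sum1_card.
by apply: eq_bigl => x; rewrite !inE; case: eqP => [->|]; rewrite ?yB ?andbF ?andbT.
Qed.

Section AdditiveFibres.
Variables (V W : finZmodType) (f : V -> W).
Hypothesis fB : {morph f : x y / x - y}.

Lemma card_fibre_additive x0 : #|f @^-1: [set f x0]| = #|f @^-1: [set 0]|.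
Proof.
rewrite -[RHS](card_imset _ (addrI x0)); apply: eq_card => x; rewrite !inE.
apply/eqP/imsetP => [fx_eq | [d]]; last first.
  by rewrite !inE => /eqP fd0 ->; apply/eqP; rewrite -subr_eq0 -fB addrC addKr fd0.
by exists (x - x0); rewrite ?inE ?fB ?fx_eq ?subrr // addrC subrK.
Qed.

Lemma card_image_mul_kernel : (#|f @: setT| * #|f @^-1: [set 0%R : W]|)%N = #|V|.
Proof.
rewrite -(card_preimset_const (f := f)); last first.
  by move=> _ /imsetP[x _ ->]; apply: card_fibre_additive.
by apply: eq_card => x; rewrite !inE imset_f ?inE.
Qed.

End AdditiveFibres.

Lemma leq_mul_squeeze (a A b B : nat) : (0 < A)%N -> (0 < B)%N ->
  (a * b = A * B)%N -> (a <= A)%N -> (b <= B)%N -> a = A /\ b = B.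
Proof.
move=> A_gt0 B_gt0 ab_eq a_le b_le.
have a_eq : a = A.
  apply/eqP; rewrite eqn_leq a_le -(leq_pmul2r B_gt0) -ab_eq.
  by rewrite leq_mul2l b_le orbT.
by split=> //; move/eqP: ab_eq; rewrite a_eq eqn_mul2l eqn0Ngt A_gt0 => /eqP.
Qed.

Lemma card_mx_entrywise (T : finType) (k l c : nat) (F : 'I_k -> 'I_l -> {set T}) :
  (forall i j, #|F i j| = c) ->
  #|[set X : 'M[T]_(k, l) | [forall i, forall j, X i j \in F i j]]| = (c ^ (k * l))%N.
Proof.
move=> cardF; set S := [set X | _].
have mx_val_inj : injective (@mx_val T k l) by move=> [a] [b] /= ->.
have -> : #|S| = #|family (fun ij : 'I_k * 'I_l => mem (F ij.1 ij.2))|.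
  rewrite -(card_imset _ mx_val_inj); apply: eq_card => g.
  apply/imsetP/familyP => [[X] | Fg].
    by rewrite inE => /forallP FX -> [i j]; have /forallP := FX i; apply.
  exists (Matrix g); rewrite // inE.
  by apply/forallP => i; apply/forallP => j; apply: (Fg (i, j)).
rewrite card_family /image_mem; under eq_map do rewrite cardF.
rewrite -[in RHS](card_ord k) -[in RHS](card_ord l) -card_prod cardE.
by elim: (enum _) => //= _ e ->; rewrite expnS.
Qed.

Definition frobn_sub (L : finFieldType) (q s : nat) (x : L) := x ^+ (q ^ s) - x.

Section FrobeniusDifference.
Variables (L : finFieldType) (q m s : nat).
Hypotheses (q_pchar : [pchar L].-nat q) (q_gt1 : (1 < q)%N).
Hypotheses (cardL : #|L| = (q ^ m)%N) (m_gt0 : (0 < m)%N).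
Hypotheses (s_gt0 : (0 < s)%N) (co_sm : coprime s m).

Local Notation phi := (@frobn_sub L q s).

Let fixL (y : L) : y ^+ (q ^ m) = y.
Proof. by rewrite -cardL expf_card. Qed.

Lemma frobn_subB : {morph phi : x y / x - y}.
Proof. by move=> x y; rewrite /frobn_sub frobnB //; ring. Qed.

Lemma frobn_sub_eq0 (x : L) : (phi x == 0) = (x ^+ q == x).
Proof.
rewrite subr_eq0; apply/eqP/eqP => [fix_s | fix_1].
  exact: fixed_expn_coprime s_gt0 co_sm fix_s (fixL x).
by rewrite -[s]mul1n fixed_expnM // expn1.
Qed.

Lemma trace_qm_frobn_sub (x : L) : trace_qm q m (phi x) = 0.
Proof. by rewrite trace_qmB // trace_qm_frobn // subrr. Qed.

Lemma image_frobn_sub_kernel :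
  phi @: setT = [set a : L | trace_qm q m a == 0] /\
  #|phi @^-1: [set 0]| = q.
Proof.
set Im := _ @: _; set Tr0 := [set a | _].
have Im_sub : Im \subset Tr0.
  by apply/subsetP => _ /imsetP[x _ ->]; rewrite inE trace_qm_frobn_sub.
have Tr0_le : (#|Tr0| <= q ^ m.-1)%N.
  by apply: card_ker_trace_qm => // a; rewrite inE => /eqP.
have ker_le : (#|phi @^-1: [set 0%R : L]| <= q)%N.
  by apply: card_fixed_expn_le => // x; rewrite !inE frobn_sub_eq0 => /eqP.
have count : (#|Im| * #|phi @^-1: [set 0%R : L]| = q ^ m.-1 * q)%N.
  by rewrite card_image_mul_kernel; last exact: frobn_subB; rewrite cardL -expnSr prednK.
have Q_gt0 : (0 < q ^ m.-1)%N by rewrite expn_gt0 ltnW.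
have [Im_card ker_card] := leq_mul_squeeze Q_gt0 (ltnW q_gt1) count
  (leq_trans (subset_leq_card Im_sub) Tr0_le) ker_le.
split=> //; apply/eqP; rewrite eqEcard Im_sub Im_card.
exact: Tr0_le.
Qed.

Lemma frobn_sub_imageP (a : L) :
  (exists x, phi x = a) <-> trace_qm q m a = 0.
Proof.
have [imE _] := image_frobn_sub_kernel; split=> [[x <-]|tr_a].
  exact: trace_qm_frobn_sub.
have : a \in phi @: setT by rewrite imE inE tr_a.
by case/imsetP => x _ ->; exists x.
Qed.

Lemma card_frobn_sub_fibre (a : L) :
  trace_qm q m a = 0 -> #|phi @^-1: [set a]| = q.
Proof.
case/frobn_sub_imageP => x <-; rewrite card_fibre_additive; last exact: frobn_subB.
by case: image_frobn_sub_kernel.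
Qed.

Variables k l : nat.

Local Notation K := (Kset L k l q m).

Lemma PhiE (X : 'M[L]_(k, l)) i j : Phi q s X i j = phi (X i j).
Proof. by rewrite !mxE. Qed.

Lemma Phi_imageP (A : 'M[L]_(k, l)) : (exists X, Phi q s X = A) <-> A \in K.
Proof.
split=> [[X <-]|]; rewrite inE.
  by apply/forallP => i; apply/forallP => j; rewrite PhiE trace_qm_frobn_sub.
move/forallP => KA; pose pre a := odflt 0 [pick x : L | phi x == a].
exists (\matrix_(i, j) pre (A i j)); apply/matrixP => i j; rewrite PhiE mxE /pre.
case: pickP => [x /eqP // | no_pre].
have /forallP/(_ j)/eqP := KA i; case/frobn_sub_imageP => x x_pre.
by have := no_pre x; rewrite x_pre eqxx.
Qed.

Lemma card_Phi_fibre_notin (A : 'M[L]_(k, l)) :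
  A \notin K -> #|Phi q s @^-1: [set A]| = 0%N.
Proof.
move=> KA; apply: eq_card0 => X; rewrite !inE; apply/eqP => PhiX.
by move/negP: KA; apply; apply/Phi_imageP; exists X.
Qed.

Lemma card_Phi_fibre_in (A : 'M[L]_(k, l)) :
  A \in K -> #|Phi q s @^-1: [set A]| = (q ^ (k * l))%N.
Proof.
rewrite inE => /forallP KA.
rewrite -(card_mx_entrywise (F := fun i j => phi @^-1: [set A i j])).
  apply: eq_card => X; rewrite !inE; apply/eqP/forallP => [<- i | fibX].
    by apply/forallP => j; rewrite !inE PhiE.
  by apply/matrixP => i j; have /forallP/(_ j) := fibX i; rewrite !inE PhiE => /eqP.
move=> i j; apply: card_frobn_sub_fibre.
by have /forallP/(_ j)/eqP := KA i.
Qed.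

Lemma Gset_Phi_preim : Gset L k l q s = Phi q s @^-1: (R1star L k l :&: K).
Proof.
apply/setP => X; rewrite !inE.
have /Phi_imageP : exists Y, Phi q s Y = Phi q s X by exists X.
rewrite inE => ->; rewrite andbT; congr (_ && _).
by apply: eq_forallb => i; apply: eq_forallb => j; rewrite PhiE frobn_sub_eq0.
Qed.

Lemma card_Gset : #|Gset L k l q s| = (q ^ (k * l) * #|R1star L k l :&: K|)%N.
Proof.
rewrite Gset_Phi_preim mulnC; apply: card_preimset_const => A.
by rewrite inE => /andP[_ KA]; apply: card_Phi_fibre_in.
Qed.

End FrobeniusDifference.

Theorem lemma4p8 (L : finFieldType) (q m k n s : nat) :
  (exists p e : nat, [/\ prime p, (0 < e)%N & q = (p ^ e)%N]) ->
  #|L| = (q ^ m)%N ->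
  (2 <= m)%N -> (1 <= k)%N -> (k < n)%N ->
  (0 < s)%N -> (s < m)%N -> coprime s m ->
  (* (1) *)
  (forall A : 'M[L]_(k, n - k),
     (exists X : 'M[L]_(k, n - k), Phi q s X = A) <-> A \in Kset L k (n - k) q m)
  /\
  (* (2) *)
  (forall A : 'M[L]_(k, n - k), A \in R1 L k (n - k) ->
     (A \notin Kset L k (n - k) q m -> #|Phi q s @^-1: [set A]| = 0%N) /\
     (A \in Kset L k (n - k) q m -> #|Phi q s @^-1: [set A]| = (q ^ (k * (n - k)))%N))
  /\
  (* (3) *)
  [/\ Gset L k (n - k) q s = Phi q s @^-1: (R1star L k (n - k) :&: Kset L k (n - k) q m),
      #|Gset L k (n - k) q 1| = #|Gset L k (n - k) q s|
    & #|Gset L k (n - k) q s| =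
        (q ^ (k * (n - k)) * #|R1star L k (n - k) :&: Kset L k (n - k) q m|)%N].
Proof.
move=> [p [e [p_prime e_gt0 def_q]]] cardL m_ge2 _ _ s_gt0 _ co_sm.
have p_char : p \in [pchar L].
  by apply: (card_finPcharP (n := (e * m)%N)); rewrite // cardL def_q expnM.
have q_pchar : [pchar L].-nat q.
  by rewrite def_q pnatX (eq_pnat _ (pcharf_eq p_char)) pnat_id.
have q_gt1 : (1 < q)%N by rewrite def_q -{1}(expn0 p) ltn_exp2l ?prime_gt1.
have m_gt0 : (0 < m)%N by apply: leq_trans m_ge2.
split; first exact: Phi_imageP.
split=> [A _|]; first by split; [apply: card_Phi_fibre_notin | apply: card_Phi_fibre_in].
have card_G := card_Gset q_pchar q_gt1 cardL m_gt0.
split; [exact: Gset_Phi_preim | | exact: card_G].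
by rewrite (card_G 1%N) ?coprime1n // card_G.
Qed.
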